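(* For every integer $d\ge 8$ there exist proper subspaces $C,C'\subsetneq\mathbb{F}_2^d$ such that $C$ is integrally non-degenerate, $\mathbf 1=(1,\dots,1)\in C$, and $\mathbf x\times\mathbf y\in C'$ for all $\mathbf x,\mathbf y\in C$.
   Context: For $\mathbf v,\mathbf w\in\mathbb{F}_2^d$, $\mathbf v\times\mathbf w=(v_1w_1,\dots,v_dw_d)$. Define $B:\mathbb{Z}^d\times\mathbb{F}_2^d\to\mathbb{Z}$ by $B(\mathbf n,\mathbf v)=\sum_{i:\,v_i=1}n_i$. A subspace $C\subset\mathbb{F}_2^d$ is integrally non-degenerate if for every nonzero $\mathbf n\in\mathbb{Z}^d$ there is $\mathbf v\in C$ with $B(\mathbf n,\mathbf v)\neq 0$. *)

From HB Require Import structures.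
From mathcomp Require Import all_boot all_order all_algebra.
Set Implicit Arguments. Unset Strict Implicit. Unset Printing Implicit Defensive.
Import GRing.Theory.
Local Open Scope ring_scope.

Notation F2vec d := 'rV['F_2]_d.

Definition cwmul d (v w : F2vec d) : F2vec d := \row_i (v 0 i * w 0 i).

Definition Bform d (n : 'I_d -> int) (v : F2vec d) : int :=
  \sum_(i < d | v 0 i == 1) n i.

Definition ones d : F2vec d := \row_i 1.

Definition int_nondegenerate d (C : {vspace F2vec d}) : Prop :=
  forall n : 'I_d -> int, (exists i, n i != 0) ->
    exists2 v, v \in C & Bform n v != 0.

(* Take for C the first-order Reed-Muller code RM(1,3) (the affine functions F_2^3 -> F_2)
   on the first eight coordinates, with the remaining coordinates free, and for C' the
   words of even weight on the first eight coordinates. RM(1,3) has a generator matrix G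
   with G G^T = 0, so x *m y^T = 0 for x, y in C, i.e. x × y has even weight; taking y = 1
   gives C <= C', so C is proper because C' is. Integral non-degeneracy comes from unit
   vectors on the free coordinates and, on the first eight, from the fact that the
   indicator vectors of the codewords of RM(1,3) span Q^8. *)

From mathcomp Require Import all_boot all_order all_algebra.
From mathcomp Require Import zify.
Set Implicit Arguments. Unset Strict Implicit. Unset Printing Implicit Defensive.
Import GRing.Theory.
Local Open Scope ring_scope.

Lemma Bform_delta d (n : 'I_d -> int) i : Bform n (delta_mx 0 i) = n i.
Proof.
rewrite /Bform (big_pred1 i) // => j /=.
by rewrite mxE eqxx /=; case: (j == i).
Qed.

Section Padding.
Variables k m : nat.
Implicit Types (U : {vspace F2vec k}) (x y : F2vec (k + m)).

Definition pad U : {vspace F2vec (k + m)} := (linfun (@lsubmx 'F_2 1 k m) @^-1: U)%VS.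

Lemma mem_pad U x : (x \in pad U) = (lsubmx x \in U).
Proof. by rewrite -memv_preim lfunE. Qed.

Lemma lsubmx_cwmul x y : lsubmx (cwmul x y) = cwmul (lsubmx x) (lsubmx y).
Proof. by apply/rowP => i; rewrite !mxE. Qed.

Lemma lsubmx_ones : lsubmx (ones (k + m)) = ones k.
Proof. by apply/rowP => i; rewrite !mxE. Qed.

Lemma Bform_row_mx0 (n : 'I_(k + m) -> int) (v : F2vec k) :
  Bform n (row_mx v 0) = Bform (fun i => n (lshift m i)) v.
Proof.
rewrite /Bform big_split_ord /= [X in _ + X]big1 ?addr0 => [|i].
  by apply: eq_bigl => i; rewrite row_mxEl.
by rewrite row_mxEr mxE.
Qed.

Lemma pad_proper U : U != fullv -> pad U != fullv.
Proof.
rewrite eqEsubv subvf /= => /subvPn[u _ uU].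
apply: contraNneq uU => padT.
by rewrite -(row_mxKl u (0 : 'rV_m)) -mem_pad padT memvf.
Qed.

Lemma pad_nondegenerate U : int_nondegenerate U -> int_nondegenerate (pad U).
Proof.
move=> ndU n [i ni0]; case: (splitP i) => j ij.
- have [|v vU Bv] := ndU (fun j => n (lshift m j)).
    by exists j; rewrite (_ : lshift m j = i) //; apply: val_inj.
  by exists (row_mx v 0); rewrite ?mem_pad ?row_mxKl ?Bform_row_mx0.
- exists (delta_mx 0 i); last by rewrite Bform_delta.
  rewrite mem_pad (_ : lsubmx _ = 0) ?mem0v //.
  apply/rowP => l; rewrite !mxE (_ : lshift m l == i = false) ?andbF //.
  by apply/negbTE; rewrite -val_eqE /= ij; have := ltn_ord l; lia.
Qed.

End Padding.

Definition even_code k : {vspace F2vec k} :=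
  lker (linfun (mulmxr (const_mx 1 : 'cV['F_2]_k))).

Lemma mem_even_code k (x : F2vec k) :
  (x \in even_code k) = (x *m const_mx 1 == 0 :> 'cV_1).
Proof. by rewrite memv_ker lfunE. Qed.

Lemma cwmul_mul_ones k (x y : F2vec k) : cwmul x y *m (const_mx 1 : 'cV_k) = x *m y^T.
Proof. by apply/rowP => i; rewrite ord1 !mxE; apply: eq_bigr => j _; rewrite !mxE mulr1. Qed.

Lemma even_code_proper k : (0 < k)%N -> even_code k != fullv.
Proof.
case: k => // k _; apply/negP => /eqP evenT.
have := memvf (delta_mx 0 ord0 : F2vec k.+1).
by rewrite -evenT mem_even_code -rowE => /eqP/rowP/(_ ord0); rewrite !mxE.
Qed.

Lemma proper_cwmul_closed d (C C' : {vspace F2vec d}) : ones d \in C ->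
  {in C &, forall x y, cwmul x y \in C'} -> C' != fullv -> C != fullv.
Proof.
move=> C1 CC'; apply: contraNneq => CT; rewrite eqEsubv subvf -CT /=.
apply/subvP => x Cx; rewrite (_ : x = cwmul x (ones d)) ?CC' //.
by apply/rowP => i; rewrite !mxE mulr1.
Qed.

Definition gen_code r k (G : 'M['F_2]_(r, k)) : {vspace F2vec k} :=
  limg (linfun (mulmxr G)).

Lemma mem_gen_code r k (G : 'M['F_2]_(r, k)) (x : F2vec k) :
  reflect (exists u, x = u *m G) (x \in gen_code G).
Proof.
apply: (iffP memv_imgP) => [[u _ ->]|[u ->]]; first by exists u; rewrite lfunE.
by exists u; rewrite ?memvf ?lfunE.
Qed.

Lemma self_orthogonal_cwmul_even r k (G : 'M['F_2]_(r, k)) : G *m G^T = 0 ->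
  {in gen_code G &, forall x y, cwmul x y \in even_code k}.
Proof.
move=> GGT0 _ _ /mem_gen_code[u ->] /mem_gen_code[w ->].
by rewrite mem_even_code cwmul_mul_ones trmx_mul mulmxA -(mulmxA u) GGT0 mulmx0 mul0mx.
Qed.

Lemma Bform_iota k (n : 'I_k.+1 -> int) (v : F2vec k.+1) :
  Bform n v = \sum_(i <- iota 0 k.+1) (if v 0 (inord i) == 1 then n (inord i) else 0).
Proof.
rewrite /Bform big_mkcond -[iota 0 _]/(index_iota 0 k.+1) big_mkord.
by apply: eq_bigr => i _; rewrite inord_val.
Qed.

(* The point i : 'I_8 of F_2^3 is identified with its binary digits; the rows of
   rm13_gen are the constant function 1 and the three coordinate functions. *)
Definition rm13_gen : 'M['F_2]_(4, 8) :=
  \matrix_(r, i) [:: 1; (odd i)%:R; (odd (i %/ 2))%:R; (odd (i %/ 4))%:R]`_r.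

Definition affine_word (c a0 a1 a2 : 'F_2) : F2vec 8 :=
  \row_i (c + a0 * (odd i)%:R + a1 * (odd (i %/ 2))%:R + a2 * (odd (i %/ 4))%:R).

Lemma rm13_gen_self_orthogonal : rm13_gen *m rm13_gen^T = 0.
Proof.
apply/matrixP => r s; rewrite !mxE !big_ord_recr big_ord0 /= !mxE.
by case: r s => [[|[|[|[|//]]]] ?] [[|[|[|[|//]]]] ?]; apply/eqP.
Qed.

Lemma affine_word_rm13 c a0 a1 a2 : affine_word c a0 a1 a2 \in gen_code rm13_gen.
Proof.
apply/mem_gen_code; exists (\row_r [:: c; a0; a1; a2]`_r).
by apply/rowP => i; rewrite !mxE !big_ord_recr big_ord0 /= !mxE /= mulr1 add0r.
Qed.

Lemma ones_rm13 : ones 8 \in gen_code rm13_gen.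
Proof.
rewrite (_ : ones 8 = affine_word 1 0 0 0) ?affine_word_rm13 //.
by apply/rowP => i; rewrite !mxE !mul0r !addr0.
Qed.

Lemma rm13_nondegenerate : int_nondegenerate (gen_code rm13_gen).
Proof.
move=> n [p np0].
have [[[a0 a1] a2] Ba | B0] :=
  pickP (fun a => Bform n (affine_word 1 a.1.1 a.1.2 a.2) != 0).
  by exists (affine_word 1 a0 a1 a2); rewrite ?affine_word_rm13.
have B a0 a1 a2 : Bform n (affine_word 1 a0 a1 a2) = 0.
  exact/eqP/negbFE/(B0 (a0, a1, a2)).
(* The words 1 + a.x (the all-ones word and the indicators of the seven planes through
   the point 0) already have linearly independent indicator vectors. *)
move: (B 0 0 0) (B 1 0 0) (B 0 1 0) (B 0 0 1) (B 1 1 0) (B 1 0 1) (B 0 1 1) (B 1 1 1)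
  => B1 B2 B3 B4 B5 B6 B7 B8.
rewrite !Bform_iota /= !big_cons !big_nil !mxE !inordK //= in B1 B2 B3 B4 B5 B6 B7 B8.
exfalso; move: np0; rewrite -(inord_val p).
by case: p => [[|[|[|[|[|[|[|[|//]]]]]]]] ?] /=; lia.
Qed.

Theorem proposition3p2 (d : nat) : (8 <= d)%N ->
  exists C C' : {vspace 'rV['F_2]_d},
    [/\ C != fullv, C' != fullv, int_nondegenerate C, ones d \in C &
        forall x y, x \in C -> y \in C -> cwmul x y \in C'].
Proof.
move=> d_ge8; rewrite -(subnKC d_ge8); move: (d - 8)%N => m.
set C := pad m (gen_code rm13_gen); set C' := pad m (even_code 8).
have CC' : {in C &, forall x y, cwmul x y \in C'}.
  move=> x y; rewrite !mem_pad lsubmx_cwmul => Cx Cy.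
  exact: self_orthogonal_cwmul_even rm13_gen_self_orthogonal _ _ Cx Cy.
have C1 : ones (8 + m) \in C by rewrite mem_pad lsubmx_ones ones_rm13.
have C'_proper : C' != fullv by exact/pad_proper/even_code_proper.
exists C, C'; split => //; first exact: proper_cwmul_closed C1 CC' C'_proper.
exact/pad_nondegenerate/rm13_nondegenerate.
Qed.
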